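(* Let $(V,\omega)$ be a vertex operator algebra. Then the set $\operatorname{Sc}(V,\omega)$ of semi-conformal vectors of $(V,\omega)$ is a Zariski closed subset of the finite-dimensional complex vector space $V_2$; in particular it is an affine algebraic variety over $\mathbb{C}$.
   Context: A vertex operator algebra $(V,Y,\mathbf 1,\omega)$ is $\mathbb Z$-graded, $V=\bigoplus_n V_n$, by the eigenvalues of $L(0)$, where $Y(\omega,z)=\sum_n L(n)z^{-n-2}$; each $V_n$ is finite dimensional and $V_n=0$ for $n\ll 0$. Write $Y(v,z)=\sum_n v_nz^{-n-1}$. A vertex operator subalgebra $(U,\omega')$ of $(V,\omega)$ is a vertex subalgebra $U\ni\mathbf 1$ together with a vector $\omega'\in U$ making $(U,Y|_U,\mathbf 1,\omega')$ a vertex operator algebra (the conformal vector $\omega'$ may differ from $\omega$). It is called semi-conformal if $L(n)|_U=L'(n)|_U$ for all $n\ge 0$, where $Y(\omega',z)=\sum_n L'(n)z^{-n-2}$ (equivalently $\omega_n|_U=\omega'_n|_U$ for all $n\ge 0$). A semi-conformal vector of $(V,\omega)$ is a vector $\omega'\in V_2$ which is the conformal vector of some semi-conformal vertex operator subalgebra. $\operatorname{Sc}(V,\omega)$ denotes the set of all semi-conformal vectors. *)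

From HB Require Import structures.
From mathcomp Require Import all_boot all_order all_algebra.
Set Implicit Arguments. Unset Strict Implicit. Unset Printing Implicit Defensive.
Import Order.TTheory GRing.Theory Num.Theory.
Local Open Scope ring_scope.

Section VOA.
Variable F : fieldType.
Variable V : lmodType F.
(* mode v n w = v_n w, where Y(v,z) = \sum_n v_n z^{-n-1} *)
Variable mode : V -> int -> V -> V.

Definition subspace (U : V -> Prop) :=
  U 0 /\ forall (a : F) x y, U x -> U y -> U (a *: x + y).

Definition fin_dim (P : V -> Prop) :=
  exists s : seq V, forall v, P v ->
    exists c : 'I_(size s) -> F, v = \sum_(i < size s) c i *: s`_i.

Definition binz (p : int) (i : nat) : F :=
  (\prod_(k < i) ((p - (k : nat)%:Z)%:~R : F)) / (i`!)%:R.

Definition Lop (om : V) (n : int) (v : V) : V := mode om (n + 1) v.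

(* Borcherds (Jacobi) identity on U; the sums are finite by truncation,
   expressed as: partial sums agree for all sufficiently large bounds. *)
Definition borcherds (U : V -> Prop) :=
  forall u v w, U u -> U v -> U w -> forall p q r : int,
  exists N : nat, forall M : nat, (N <= M)%N ->
    \sum_(i < M) binz p i *: mode (mode u (r + (i : nat)%:Z) v) (p + q - (i : nat)%:Z) w =
    \sum_(i < M) ((-1) ^+ i * binz r i) *:
       (mode u (p + r - (i : nat)%:Z) (mode v (q + (i : nat)%:Z) w)
        - (-1) ^ r *: mode v (q + r - (i : nat)%:Z) (mode u (p + (i : nat)%:Z) w)).

Record is_VOA (U : V -> Prop) (vac om : V) : Prop := {
  voa_subspace : subspace U;
  voa_vac : U vac;
  voa_om : U om;
  voa_closed : forall u n v, U u -> U v -> U (mode u n v);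
  voa_lin_l : forall (a : F) u1 u2 n v, U u1 -> U u2 -> U v ->
     mode (a *: u1 + u2) n v = a *: mode u1 n v + mode u2 n v;
  voa_lin_r : forall (a : F) u n v1 v2, U u -> U v1 -> U v2 ->
     mode u n (a *: v1 + v2) = a *: mode u n v1 + mode u n v2;
  voa_trunc : forall u v, U u -> U v ->
     exists N : int, forall n, N <= n -> mode u n v = 0;
  voa_vacuum : forall n v, U v -> mode vac n v = if n == -1 then v else 0;
  voa_creation : forall v, U v ->
     mode v (-1) vac = v /\ (forall n : int, 0 <= n -> mode v n vac = 0);
  voa_borcherds : borcherds U;
  voa_virasoro : exists c : F, forall (m n : int) v, U v ->
     Lop om m (Lop om n v) - Lop om n (Lop om m v) =
       (m - n)%:~R *: Lop om (m + n) v
       + (if m + n == 0 then (m ^+ 3 - m)%:~R / 12%:R * c else 0) *: v;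
  voa_deriv : forall v w (n : int), U v -> U w ->
     mode (Lop om (-1) v) n w = - (n%:~R) *: mode v (n - 1) w;
  voa_grading : forall v, U v -> exists s : seq (int * V),
     v = \sum_(x <- s) x.2 /\
     (forall x, x \in s -> U x.2 /\ Lop om 0 x.2 = (x.1)%:~R *: x.2);
  voa_findim : forall n : int,
     fin_dim (fun v => U v /\ Lop om 0 v = n%:~R *: v);
  voa_bounded : exists N : int, forall (n : int) v,
     n < N -> U v -> Lop om 0 v = n%:~R *: v -> v = 0
}.

Definition semi_conformal_sub (vac om : V) (U : V -> Prop) (om' : V) :=
  is_VOA U vac om' /\
  forall u (n : int), U u -> 0 <= n -> mode om n u = mode om' n u.

Definition Sc (vac om : V) (om' : V) :=
  Lop om 0 om' = 2%:R *: om' /\ exists U : V -> Prop, semi_conformal_sub vac om U om'.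

Inductive polyfun : (V -> F) -> Prop :=
| pf_const (c : F) : polyfun (fun _ => c)
| pf_lin (phi : V -> F) :
    (forall (a : F) x y, phi (a *: x + y) = a * phi x + phi y) -> polyfun phi
| pf_add f g : polyfun f -> polyfun g -> polyfun (fun x => f x + g x)
| pf_mul f g : polyfun f -> polyfun g -> polyfun (fun x => f x * g x).

Definition zariski_closed_in (D S : V -> Prop) :=
  exists (n : nat) (fs : 'I_n -> V -> F),
    (forall i, polyfun (fs i)) /\
    forall x, S x <-> (D x /\ forall i, fs i x = 0).

End VOA.

From HB Require Import structures.
From mathcomp Require Import all_boot all_order all_algebra.
Import GRing.Theory Num.Theory.
Local Open Scope ring_scope.
From mathcomp Require Import zify ring.
From Stdlib Require Import ClassicalEpsilon Classical FunctionalExtensionality.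
Set Implicit Arguments. Unset Strict Implicit. Unset Printing Implicit Defensive.

(* A vector [x] of weight 2 is semi-conformal iff [om_n x = x_n x] for all
   [n >= 0], [x_2 x = 0], [x_3 x] is a multiple of the vacuum and [x_n x = 0]
   for [n >= 4].  Necessity comes from the Virasoro relations of [x] applied
   to the vacuum; for sufficiency, the vertex subalgebra generated by [vac]
   and [x] is a vertex operator algebra with conformal vector [x], because the
   commutator formula propagates [om_n = x_n] from the generators.  As [x_n x]
   and [om_n x] have weight [3 - n] and the weights are bounded below, only
   finitely many of these conditions are not automatic, and each one is the
   vanishing of a quadratic polynomial map from the finite-dimensional [V_2]
   to a finite-dimensional weight space. *)

Section SpanCoordinates.
Variables (K : fieldType) (W : lmodType K) (m : nat) (t : 'I_m -> W).

Definition lincomb (c : 'rV[K]_m) : W := \sum_(i < m) c 0 i *: t i.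

Fact lincomb_is_linear : linear lincomb.
Proof.
move=> a c d; rewrite /lincomb scaler_sumr -big_split /=; apply: eq_bigr => i _.
by rewrite !mxE scalerDl scalerA.
Qed.
HB.instance Definition _ :=
  GRing.isLinear.Build K 'rV_m W *:%R lincomb lincomb_is_linear.

Lemma lincomb_eq0_sub n (A : 'M_(n, m)) c :
  (forall i, lincomb (row i A) = 0) -> (c <= A)%MS -> lincomb c = 0.
Proof.
move=> rowsA /submxP[D ->]; rewrite mulmx_sum_row linear_sum big1 // => j _.
by rewrite linearZ /= rowsA scaler0.
Qed.

Lemma lincomb_eq0_adds n (A : 'M_(n, m)) c x :
  (forall i, lincomb (row i A) = 0) -> lincomb c = 0 ->
  (x <= A + c)%MS -> lincomb x = 0.
Proof.
move=> rowsA c0 /sub_addsmxP[[u1 u2] -> /=]; rewrite linearD /=.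
rewrite (lincomb_eq0_sub rowsA (submxMl _ _)).
by rewrite (@lincomb_eq0_sub _ c) ?submxMl ?addr0 // => i; rewrite row_id.
Qed.

Lemma lincomb_kernel : exists2 B : 'M[K]_m,
  forall i, lincomb (row i B) = 0 & forall c, lincomb c = 0 -> (c <= B)%MS.
Proof.
suff grow d (B : 'M[K]_m) : (forall i, lincomb (row i B) = 0) ->
    (m - \rank B <= d)%N -> exists2 B' : 'M[K]_m,
    forall i, lincomb (row i B') = 0 & forall c, lincomb c = 0 -> (c <= B')%MS.
  apply: (grow m 0); last exact: leq_subr.
  by move=> i; rewrite row0 linear0.
elim: d B => [|d IHd] B rowsB rankB.
  exists B => // c _; apply: submx_full; rewrite -col_leq_rank.
  by move: rankB (rank_leq_col B); lia.
have [maxB|] := classic (forall c, lincomb c = 0 -> (c <= B)%MS); first by exists B.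
move=> /not_all_ex_not[c not_maxc]; have [c0 cB] := imply_to_and _ _ not_maxc.
have ltB : (B < B + c)%MS.
  by rewrite ltmxE addsmxSl; apply/negP => /(submx_trans (addsmxSr B c)).
apply: (IHd (B + c)%MS); first by move=> i; apply: lincomb_eq0_adds (row_sub _ _).
by move: (rank_ltmx ltB) (rank_leq_col (B + c)%MS) rankB; lia.
Qed.

(* Coefficients modulo relations, normalised by projecting off the kernel. *)
Lemma span_coordinates : exists coord : ('I_m -> W -> K),
  (forall j a x y, (exists c, lincomb c = x) -> (exists c, lincomb c = y) ->
     coord j (a *: x + y) = a * coord j x + coord j y) /\
  forall w, (exists c, lincomb c = w) -> w = \sum_(j < m) coord j w *: t j.
Proof.
have [B rowsB maxB] := lincomb_kernel.
pose coef w := epsilon (inhabits (0 : 'rV[K]_m)) (fun c => lincomb c = w).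
have coefP w : (exists c, lincomb c = w) -> lincomb (coef w) = w.
  by move=> [c cw]; apply: (epsilon_spec _ (fun c => lincomb c = w)); exists c.
pose C := (B^C)%MS.
have CB : (C :&: B = 0)%MS by rewrite capmxC capmx_compl.
have CB_full (u : 'rV_m) : (u <= C + B)%MS.
  by apply: submx_full; rewrite addsmxC addsmx_compl_full.
pose coord w := coef w *m proj_mx C B.
exists (fun j w => coord w 0 j); split=> [j a x y spx spy|w spw]; last first.
  have /(congr1 lincomb) := add_proj_mx CB (CB_full (coef w)).
  by rewrite linearD /= (lincomb_eq0_sub rowsB (proj_mx_sub _ _ _)) addr0 coefP.
have rel : lincomb (coef (a *: x + y) - (a *: coef x + coef y)) = 0.
  rewrite linearB /= linearD /= linearZ /= !coefP ?subrr //.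
  by case: spx => cx <-; case: spy => cy <-; exists (a *: cx + cy); rewrite linearP.
suff -> : coord (a *: x + y) = a *: coord x + coord y by rewrite !mxE.
apply/eqP; rewrite -subr_eq0 /coord scalemxAl -mulmxDl -mulmxBl.
by rewrite proj_mx_0 ?maxB.
Qed.

End SpanCoordinates.

Section ZariskiClosed.
Variables (F : fieldType) (V : lmodType F).

Lemma polyfun_sum n (f : 'I_n -> V -> F) : (forall i, polyfun (f i)) ->
  polyfun (fun x => \sum_(i < n) f i x).
Proof.
elim: n f => [|n IHn] f pf.
  have -> : (fun x => \sum_(i < 0) f i x) = (fun=> 0).
    by apply: functional_extensionality => x; rewrite big_ord0.
  exact: pf_const.
have -> : (fun x => \sum_(i < n.+1) f i x) =
    (fun x => (fun y => \sum_(i < n) f (widen_ord (leqnSn n) i) y) x + f ord_max x).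
  by apply: functional_extensionality => x; rewrite big_ord_recr.
by apply: pf_add => //; apply: IHn.
Qed.

Lemma eq_zariski_closed (D S S' : V -> Prop) : (forall x, S x <-> S' x) ->
  zariski_closed_in D S -> zariski_closed_in D S'.
Proof. by move=> SS' [n [fs [pfs Sfs]]]; exists n, fs; split => // x; rewrite -SS'. Qed.

Lemma zariski_closed_self (D : V -> Prop) : zariski_closed_in D D.
Proof.
exists 0%N, (fun _ _ => 0); split=> [i|x]; first exact: pf_const.
by split=> [|[]//]; split=> // [[]].
Qed.

Lemma zariski_closedI (D P Q : V -> Prop) :
  zariski_closed_in D (fun x => D x /\ P x) ->
  zariski_closed_in D (fun x => D x /\ Q x) ->
  zariski_closed_in D (fun x => D x /\ P x /\ Q x).
Proof.
move=> [n1 [f1 [pf1 P_f1]]] [n2 [f2 [pf2 Q_f2]]].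
exists (n1 + n2)%N, (fun i => match split i with inl a => f1 a | inr b => f2 b end).
split=> [i|x]; first by case: (split i).
split=> [[Dx [Px Qx]]|[Dx f0]].
  have /P_f1[_ f1x] : D x /\ P x by [].
  have /Q_f2[_ f2x] : D x /\ Q x by [].
  by split=> // i; case: (split i).
have /P_f1[_ Px] : D x /\ forall i, f1 i x = 0.
  by split=> // i; have := f0 (unsplit (inl i)); rewrite unsplitK.
have /Q_f2[_ Qx] : D x /\ forall i, f2 i x = 0.
  by split=> // i; have := f0 (unsplit (inr i)); rewrite unsplitK.
by [].
Qed.

Lemma zariski_closed_bigI (D : V -> Prop) (P : nat -> V -> Prop) N :
  (forall n, zariski_closed_in D (fun x => D x /\ P n x)) ->
  zariski_closed_in D (fun x => D x /\ forall n, (n < N)%N -> P n x).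
Proof.
move=> zcP; elim: N => [|N IHN].
  by apply: eq_zariski_closed (zariski_closed_self D) => x; split=> [Dx|[]].
apply: eq_zariski_closed (zariski_closedI IHN (zcP N)) => x.
split=> [[Dx [PltN PN]]|[Dx Plt]]; split=> //.
  by move=> n; rewrite ltnS leq_eqVlt => /predU1P[->|/PltN].
by split=> [n ltnN|]; apply: Plt; rewrite // ltnS ltnW.
Qed.

End ZariskiClosed.

Lemma sum_partition_fst (T : eqType) (W : nmodType) (s : seq (T * W)) (ns : seq T) :
  uniq ns -> {subset map fst s <= ns} ->
  \sum_(x <- s) x.2 = \sum_(n <- ns) \sum_(x <- s | x.1 == n) x.2.
Proof.
move=> uniq_ns s_ns; under [RHS]eq_bigr do rewrite big_mkcond.
rewrite exchange_big /=; apply: eq_big_seq => x xs.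
rewrite (bigD1_seq x.1) ?s_ns ?map_f //= eqxx big1 ?addr0 // => n /negPf.
by rewrite eq_sym => ->.
Qed.

Section VertexOperatorAlgebra.
Variables (F : numFieldType) (V : lmodType F) (mode : V -> int -> V -> V) (vac om : V).
Hypothesis HV : is_VOA mode (fun _ => True) vac om.

Fact mode_is_linear u n : linear (mode u n).
Proof. by move=> a v w; apply: (voa_lin_r HV). Qed.
HB.instance Definition _ u n :=
  GRing.isLinear.Build F V V *:%R (mode u n) (mode_is_linear u n).

Lemma modePl a u1 u2 n v : mode (a *: u1 + u2) n v = a *: mode u1 n v + mode u2 n v.
Proof. exact: (voa_lin_l HV a n I I I). Qed.

Lemma mode0l n v : mode 0 n v = 0.
Proof.
have := modePl 1 0 0 n v; rewrite !scale1r addr0 => dup.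
by apply: (addrI (mode 0 n v)); rewrite addr0 -dup.
Qed.

Lemma modeDl u1 u2 n v : mode (u1 + u2) n v = mode u1 n v + mode u2 n v.
Proof. by have := modePl 1 u1 u2 n v; rewrite !scale1r. Qed.

Lemma modeZl a u n v : mode (a *: u) n v = a *: mode u n v.
Proof. by have := modePl a u 0 n v; rewrite !addr0 mode0l addr0. Qed.

Lemma mode_suml (I : Type) (r : seq I) (P : pred I) (f : I -> V) n v :
  mode (\sum_(i <- r | P i) f i) n v = \sum_(i <- r | P i) mode (f i) n v.
Proof.
apply: (big_rec2 (fun x y => mode x n v = y)); first exact: mode0l.
by move=> i x y _ <-; rewrite modeDl.
Qed.

Lemma binz0 p : binz F p 0 = 1.
Proof. by rewrite /binz big_ord0 fact0 divr1. Qed.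

Lemma binz0S i : binz F 0 i.+1 = 0.
Proof. by rewrite /binz big_ord_recl /= subr0 !mul0r. Qed.

Lemma binz1 p : binz F p 1 = p%:~R.
Proof. by rewrite /binz big_ord_recl big_ord0 /= subr0 mulr1 divr1. Qed.

Lemma binz1SS i : binz F 1 i.+2 = 0.
Proof. by rewrite /binz !big_ord_recl /= subrr mul0r mulr0 mul0r. Qed.

Lemma binz3 (m : int) : binz F (m + 1) 3 = (m ^+ 3 - m)%:~R / 6%:R.
Proof.
rewrite /binz !big_ord_recl big_ord0 mulr1 /=; congr (_ / _); rewrite -!intrM.
by rewrite /bump /=; congr (_%:~R); ring.
Qed.

(* The Borcherds identity at [r = 0]. *)
Lemma commutator_formula u v w p q : exists N, forall M, (N <= M)%N ->
  mode u p (mode v q w) - mode v q (mode u p w) =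
  \sum_(i < M) binz F p i *: mode (mode u i%:Z v) (p + q - i%:Z) w.
Proof.
have [N borch] := voa_borcherds HV (u := u) (v := v) (w := w) I I I p q 0.
exists (maxn N 1) => -[|M]; rewrite geq_max ?andbF // => /andP[/borch-> _].
rewrite big_ord_recl big1 ?addr0 => [|i _]; last by rewrite binz0S mulr0 scale0r.
by rewrite expr0 binz0 mulr1 expr0z !scale1r.
Qed.

(* [mode om 1] is L(0), so [weight 2] is the set [V_2] of the theorem. *)
Definition weight (n : int) (v : V) := mode om 1 v = n%:~R *: v.

Lemma mode_Lm1 v n w : mode (mode om 0 v) n w = - n%:~R *: mode v (n - 1) w.
Proof. by have := voa_deriv HV (v := v) (w := w) n I I; rewrite /Lop addNr. Qed.

Lemma L0_mode u v (k n : int) : weight k u ->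
  mode om 1 (mode u n v) = (k - n - 1)%:~R *: mode u n v + mode u n (mode om 1 v).
Proof.
move=> u_wt; have [N comm] := commutator_formula om u v 1 n.
move: (comm N.+2 (leqW (leqnSn N))); rewrite !big_ord_recl big1 => [|i _]; last first.
  by rewrite binz1SS scale0r.
rewrite /bump /= addr0 binz0 binz1 !scale1r mode_Lm1 u_wt modeZl.
rewrite (_ : 1 + n - 1 = n); last by lia.
move/eqP; rewrite subr_eq addr0 -scalerDl => /eqP ->.
by congr (_ *: _ + _); rewrite -intrN -intrD; congr (_%:~R); lia.
Qed.

Lemma weight0 n : weight n 0.
Proof. by rewrite /weight linear0 scaler0. Qed.

Lemma weightP n a x y : weight n x -> weight n y -> weight n (a *: x + y).
Proof. by rewrite /weight linearP /= => -> ->; rewrite scalerDr !scalerA mulrC. Qed.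

Lemma weightD n x y : weight n x -> weight n y -> weight n (x + y).
Proof. by move=> x_wt y_wt; have := weightP 1 x_wt y_wt; rewrite scale1r. Qed.

Lemma weightZ n a x : weight n x -> weight n (a *: x).
Proof. by move=> x_wt; have := weightP a x_wt (weight0 n); rewrite addr0. Qed.

Lemma weightN n x : weight n x -> weight n (- x).
Proof. by move=> x_wt; rewrite -scaleN1r; apply: weightZ. Qed.

Lemma weightB n x y : weight n x -> weight n y -> weight n (x - y).
Proof. by move=> x_wt y_wt; apply/weightD/weightN. Qed.

Lemma weight_sum n (I : Type) (r : seq I) (P : pred I) (f : I -> V) :
  (forall i, P i -> weight n (f i)) -> weight n (\sum_(i <- r | P i) f i).
Proof.
move=> f_wt; apply: (big_rec (weight n)); first exact: weight0.
by move=> i x Pi x_wt; apply/weightD/x_wt/f_wt.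
Qed.

Lemma weight_mode a b n u v :
  weight a u -> weight b v -> weight (a + b - n - 1) (mode u n v).
Proof.
move=> u_wt v_wt; rewrite /weight (L0_mode _ _ u_wt) v_wt linearZ -scalerDl.
by congr (_ *: _); rewrite -intrD; congr (_%:~R); lia.
Qed.

Lemma weight_vac : weight 0 vac.
Proof. by rewrite /weight scale0r; apply: (voa_creation HV I).2. Qed.

Lemma weight_om : weight 2 om.
Proof.
have [c vir] := voa_virasoro HV; have [om_1 om_n] := voa_creation HV (v := om) I.
move: (vir 0 (-2) vac I); rewrite /Lop /= (om_n (0 + 1)) // linear0 subr0.
by rewrite scale0r addr0 !om_1.
Qed.

Lemma weight_components_eq0 (ns : seq int) (g : int -> V) : uniq ns ->
  (forall n, n \in ns -> weight n (g n)) -> \sum_(n <- ns) g n = 0 ->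
  forall n, n \in ns -> g n = 0.
Proof.
elim: ns g => [|a ns IHns] g //= /andP[a_ns uniq_ns] g_wt; rewrite big_cons => sum0.
have L0a_sum : mode om 1 (g a + \sum_(n <- ns) g n) -
    a%:~R *: (g a + \sum_(n <- ns) g n) = 0.
  by rewrite sum0 linear0 scaler0 subr0.
have sum'0 : \sum_(n <- ns) (n - a)%:~R *: g n = 0.
  rewrite -[RHS]L0a_sum linearD linear_sum /= (g_wt a) ?mem_head // scalerDr opprD.
  rewrite addrACA subrr add0r scaler_sumr -sumrB; apply: eq_big_seq => n n_ns.
  by rewrite (g_wt n) ?inE ?n_ns ?orbT // -scalerBl -intrB.
have g'_wt n : n \in ns -> weight n ((n - a)%:~R *: g n).
  by move=> n_ns; apply/weightZ/g_wt; rewrite inE n_ns orbT.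
have g_ns n : n \in ns -> g n = 0.
  move=> n_ns; have /eqP := IHns _ uniq_ns g'_wt sum'0 n n_ns.
  rewrite scaler_eq0 intr_eq0 subr_eq0 => /orP[/eqP na|/eqP //].
  by move: a_ns; rewrite -na n_ns.
move=> n; rewrite inE => /predU1P[->|]; last exact: g_ns.
by move: sum0; rewrite big1_seq ?addr0 // => n /andP[_ /g_ns].
Qed.

Definition weight_decomposition (v : V) (s : seq (int * V)) :=
  v = \sum_(x <- s) x.2 /\ forall x, x \in s -> weight x.1 x.2.

Lemma weight_decomposition_exists v : exists s, weight_decomposition v s.
Proof.
have [s [sum_s s_wt]] := voa_grading HV (v := v) I.
by exists s; split=> // x /s_wt[].
Qed.

Definition weight_dec (v : V) : seq (int * V) :=
  proj1_sig (constructive_indefinite_description _ (weight_decomposition_exists v)).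

Lemma weight_decP v : weight_decomposition v (weight_dec v).
Proof. exact: proj2_sig (constructive_indefinite_description _ _). Qed.

Definition wt_proj (n : int) (v : V) : V := \sum_(x <- weight_dec v | x.1 == n) x.2.

Lemma weight_decomposition0 s : weight_decomposition 0 s ->
  forall n, \sum_(x <- s | x.1 == n) x.2 = 0.
Proof.
move=> [sum0 s_wt] n; set ns := undup (map fst s).
have [n_ns|n_ns] := boolP (n \in ns); last first.
  apply: big1_seq => x /andP[/eqP x_n xs]; move: n_ns.
  by rewrite -x_n mem_undup map_f.
apply: (@weight_components_eq0 ns (fun k => \sum_(x <- s | x.1 == k) x.2)) => //.
- exact: undup_uniq.
- move=> k _; rewrite big_seq_cond.
  by apply: weight_sum => x /andP[/s_wt + /eqP <-].
- by rewrite -sum_partition_fst ?undup_uniq // => y; rewrite mem_undup.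
Qed.

Lemma wt_projE v s n : weight_decomposition v s ->
  wt_proj n v = \sum_(x <- s | x.1 == n) x.2.
Proof.
move=> [sum_s s_wt]; have [sum_d d_wt] := weight_decP v.
have diff0 : weight_decomposition 0 (weight_dec v ++ [seq (x.1, - x.2) | x <- s]).
  split=> [|x]; first by rewrite big_cat big_map sumrN /= -sum_s -sum_d subrr.
  by rewrite mem_cat => /orP[/d_wt //|/mapP[y /s_wt y_wt ->]]; apply: weightN.
move: (weight_decomposition0 diff0 n); rewrite big_cat big_map sumrN /=.
by move/eqP; rewrite subr_eq0 => /eqP.
Qed.

Fact wt_proj_is_linear n : linear (wt_proj n).
Proof.
move=> a v w; have [sum_v v_wt] := weight_decP v; have [sum_w w_wt] := weight_decP w.
set s := [seq (x.1, a *: x.2) | x <- weight_dec v] ++ weight_dec w.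
have dec_s : weight_decomposition (a *: v + w) s.
  split=> [|x]; first by rewrite big_cat big_map /= -scaler_sumr -sum_v -sum_w.
  by rewrite mem_cat => /orP[/mapP[y /v_wt y_wt ->]|/w_wt //]; apply: weightZ.
by rewrite (wt_projE n dec_s) big_cat big_map /= -scaler_sumr.
Qed.
HB.instance Definition _ n :=
  GRing.isLinear.Build F V V *:%R (wt_proj n) (wt_proj_is_linear n).

Lemma wt_proj_weight n v : weight n (wt_proj n v).
Proof.
have [_ d_wt] := weight_decP v; rewrite /wt_proj big_seq_cond.
by apply: weight_sum => x /andP[/d_wt + /eqP <-].
Qed.

Lemma wt_proj_id n v : weight n v -> wt_proj n v = v.
Proof.
move=> v_wt; have dec_v : weight_decomposition v [:: (n, v)].
  by split=> [|x]; [rewrite big_seq1 | rewrite inE => /eqP ->].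
by rewrite (wt_projE n dec_v) big_cons big_nil /= eqxx addr0.
Qed.

Lemma weight_coordinates n : exists m (t : 'I_m -> V) (c : 'I_m -> V -> F),
  [/\ forall j, linear_for *%R (c j), forall j, weight n (t j) &
      forall v, weight n v -> v = \sum_(j < m) c j v *: t j].
Proof.
have [s s_span] := voa_findim HV n.
pose t (j : 'I_(size s)) := wt_proj n s`_j.
have t_span v : weight n v -> exists c, lincomb t c = v.
  move=> v_wt; have [c v_sum] := s_span v (conj I v_wt).
  exists (\row_i c i); rewrite -(wt_proj_id v_wt) v_sum /lincomb linear_sum.
  by apply: eq_bigr => i _; rewrite mxE linearZ.
have [coord [coord_lin coord_span]] := span_coordinates t.
exists (size s), t, (fun j v => coord j (wt_proj n v)); split=> [j a x y|j|v v_wt].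
- by rewrite linearP /= coord_lin //; apply/t_span/wt_proj_weight.
- exact: wt_proj_weight.
- by rewrite -{1}(wt_proj_id v_wt) {1}(coord_span _ (t_span _ (wt_proj_weight n v))).
Qed.

Lemma vac_functional : exists2 psi : V -> F,
  linear_for *%R psi & vac != 0 -> psi vac = 1.
Proof.
have [vac0|vac_neq0] := eqVneq vac 0.
  by exists (fun=> 0) => // a x y; rewrite mulr0 addr0.
have [m [t [c [c_lin _ c_span]]]] := weight_coordinates 0.
have [j cj_vac] : exists j, c j vac != 0.
  apply: NNPP => all0; move/eqP: vac_neq0; apply.
  rewrite (c_span _ weight_vac) big1 // => j _.
  have [->|cj] := eqVneq (c j vac) 0; first by rewrite scale0r.
  by case: all0; exists j.
exists (fun v => c j v / c j vac) => [a x y|_]; last by rewrite divff.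
by rewrite c_lin mulrDl mulrA.
Qed.

Inductive generated (x : V) : V -> Prop :=
| generated_vac : generated x vac
| generated_self : generated x x
| generatedP a u v : generated x u -> generated x v -> generated x (a *: u + v)
| generated_mode u n v : generated x u -> generated x v -> generated x (mode u n v).

Lemma generated0 x : generated x 0.
Proof.
by have := generatedP (-1) (generated_vac x) (generated_vac x); rewrite scaleN1r addNr.
Qed.

Lemma generatedZ x a u : generated x u -> generated x (a *: u).
Proof. by move=> gen_u; have := generatedP a gen_u (generated0 x); rewrite addr0. Qed.

(* For [n >= 0] the commutator formula writes [y_n (u_m v)] in terms of
   [u_m (y_n v)] and the modes of the [y_k u], [k >= 0], so agreement of the
   non-negative modes of [om] and [x] propagates from the generators. *)
Lemma generated_semi_conformal x : (forall n : nat, mode om n x = mode x n x) ->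
  forall u, generated x u -> forall n : int, 0 <= n -> mode om n u = mode x n u.
Proof.
move=> om_x u; elim=> {u} [n n_ge0|[] //|a u v _ IHu _ IHv n n_ge0
                          |u m v _ IHu _ IHv n n_ge0].
- by rewrite (voa_creation HV (v := om) I).2 // (voa_creation HV (v := x) I).2.
- by rewrite !linearP /= IHu // IHv.
- have [N1 comm_om] := commutator_formula om u v n m.
  have [N2 comm_x] := commutator_formula x u v n m.
  apply: (addIr (- mode u m (mode om n v))); rewrite {2}IHv //.
  rewrite (comm_om _ (leq_maxl N1 N2)) (comm_x _ (leq_maxr N1 N2)).
  by apply: eq_bigr => i _; rewrite IHu.
Qed.

Lemma generated_graded x : weight 2 x -> forall u, generated x u ->
  exists s : seq (int * V), u = \sum_(y <- s) y.2 /\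
    forall y, y \in s -> generated x y.2 /\ weight y.1 y.2.
Proof.
move=> x_wt u; elim=> {u} [||a u v _ [su [sum_u su_gen]] _ [sv [sum_v sv_gen]]
                          |u m v _ [su [sum_u su_gen]] _ [sv [sum_v sv_gen]]].
- exists [:: (0, vac)]; rewrite big_seq1; split=> // y; rewrite inE => /eqP -> /=.
  by split; [exact: generated_vac | exact: weight_vac].
- exists [:: (2, x)]; rewrite big_seq1; split=> // y; rewrite inE => /eqP -> /=.
  by split; [exact: generated_self | exact: x_wt].
- exists ([seq (y.1, a *: y.2) | y <- su] ++ sv); split.
    by rewrite big_cat big_map /= -scaler_sumr -sum_u -sum_v.
  move=> y; rewrite mem_cat => /orP[/mapP[z /su_gen[z_gen z_wt] ->]|/sv_gen //].
  by split; [apply: generatedZ | apply: weightZ].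
- exists [seq (y.1 + z.1 - m - 1, mode y.2 m z.2) | y <- su, z <- sv]; split.
    rewrite big_allpairs_dep /= sum_u mode_suml; apply: eq_bigr => y _.
    by rewrite sum_v linear_sum.
  move=> y /allpairsP[[y1 z1] [/= /su_gen[gen1 wt1] /sv_gen[gen2 wt2] ->]] /=.
  by split; [apply: generated_mode | apply: weight_mode].
Qed.

Lemma virasoro_of_modes x c : weight 2 x ->
  mode om 0 x = mode x 0 x -> mode om 1 x = mode x 1 x ->
  mode x 2 x = 0 -> mode x 3 x = c *: vac ->
  (forall n : nat, (4 <= n)%N -> mode x n x = 0) ->
  forall (m n : int) v,
  Lop mode x m (Lop mode x n v) - Lop mode x n (Lop mode x m v) =
  (m - n)%:~R *: Lop mode x (m + n) v +
  (if m + n == 0 then (m ^+ 3 - m)%:~R / 12%:R * (2 * c) else 0) *: v.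
Proof.
move=> x_wt x_0 x_1 x_2 x_3 x_high m n v.
have [N comm] := commutator_formula x x v (m + 1) (n + 1).
rewrite /Lop (comm _ (leq_addl 4 N)) !big_ord_recl big1 => [|i _]; last first.
  by rewrite /bump /= x_high ?mode0l ?scaler0.
rewrite !lift0 /= addr0 binz0 binz1 x_2 mode0l scaler0 add0r scale1r.
rewrite -x_0 mode_Lm1 -x_1 x_wt x_3 !modeZl (voa_vacuum HV _ I) addr0.
rewrite (_ : m + 1 + (n + 1) - 1 = m + n + 1); last by lia.
rewrite (_ : (m + 1 + (n + 1) - 3%:Z == -1) = (m + n == 0)); last first.
  by apply/eqP/eqP; lia.
rewrite !scalerA addrA -scalerDl; congr (_ *: _ + _).
  by rewrite -intrM -intrN -intrD; congr (_%:~R); lia.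
case: eqP => _; last by rewrite scaler0 scale0r.
by rewrite binz3; congr (_ *: _); field.
Qed.

Lemma Sc_of_modes x c : weight 2 x -> (forall n : nat, mode om n x = mode x n x) ->
  mode x 2 x = 0 -> mode x 3 x = c *: vac ->
  (forall n : nat, (4 <= n)%N -> mode x n x = 0) -> Sc mode vac om x.
Proof.
move=> x_wt om_x x_2 x_3 x_high; have gen_sc := generated_semi_conformal om_x.
have L0_gen u : generated x u -> Lop mode x 0 u = mode om 1 u.
  by move=> gen_u; rewrite /Lop add0r gen_sc.
split; first exact: x_wt.
exists (generated x); split=> [|u n gen_u n_ge0]; last exact: gen_sc.
constructor.
- by split=> [|a u v]; [exact: generated0 | exact: generatedP].
- exact: generated_vac.
- exact: generated_self.
- by move=> u n v; exact: generated_mode.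
- by move=> a u1 u2 n v _ _ _; exact: modePl.
- by move=> a u n v1 v2 _ _ _; exact: linearP.
- by move=> u v _ _; exact: (voa_trunc HV I I).
- by move=> n v _; exact: (voa_vacuum HV n I).
- by move=> v _; exact: (voa_creation HV I).
- by move=> u v w _ _ _; exact: (voa_borcherds HV I I I).
- exists (2 * c) => m n v _; apply: virasoro_of_modes => //.
  + exact: (om_x 0%N).
  + exact: (om_x 1%N).
- move=> v w n gen_v _; rewrite /Lop addNr -(gen_sc v gen_v 0) //; exact: mode_Lm1.
- move=> v gen_v; have [s [sum_s s_wt]] := generated_graded x_wt gen_v.
  by exists s; split=> // y /s_wt[gen_y y_wt]; rewrite L0_gen.
- move=> n; have [s s_span] := voa_findim HV n.
  exists s => v [gen_v v_wt]; apply: s_span.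
  by split=> //; rewrite /Lop add0r -L0_gen.
- have [N low] := voa_bounded HV; exists N => n v n_lt gen_v v_wt.
  by apply: (low n v n_lt I); rewrite /Lop add0r -L0_gen.
Qed.

Lemma modes_of_Sc x : Sc mode vac om x ->
  [/\ weight 2 x, forall n : nat, mode om n x = mode x n x, mode x 2 x = 0,
      exists c, mode x 3 x = c *: vac & forall n : nat, (4 <= n)%N -> mode x n x = 0].
Proof.
move=> [x_wt [U [UV om_x]]]; have [c vir] := voa_virasoro UV.
have [x_1 x_n] := voa_creation HV (v := x) I.
(* The Virasoro relation for [L'(j)] and [L'(-2)] applied to [vac]. *)
have x_vac j : (1 <= j)%N -> mode x j.+1 x =
    (if j == 2%N then (j%:Z ^+ 3 - j%:Z)%:~R / 12%:R * c else 0) *: vac.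
  move=> j_ge1; move: (vir j%:Z (-2) vac (voa_vac UV)).
  rewrite /Lop (_ : -2 + 1 = -1) // x_1 (x_n (j%:Z + 1)); last by lia.
  rewrite (x_n (j%:Z - 2 + 1)); last by lia.
  rewrite linear0 subr0 scaler0 add0r (_ : j%:Z + 1 = j.+1%:Z); last by lia.
  move=> ->; congr (_ *: _); rewrite (_ : (j%:Z - 2 == 0) = (j == 2%N)) //.
  by apply/eqP/eqP; lia.
split=> //.
- by move=> n; apply: om_x (voa_om UV) _.
- by rewrite (x_vac 1%N) // scale0r.
- by eexists; exact: (x_vac 2%N).
- move=> n n_ge4; have := x_vac n.-1 ltac:(lia).
  rewrite (_ : n.-1.+1 = n); last by lia.
  by move=> ->; case: eqP => [|_]; [lia | rewrite scale0r].
Qed.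

Lemma weight_mode2 n u v : weight 2 u -> weight 2 v -> weight (3 - n) (mode u n v).
Proof.
by move=> u_wt v_wt; rewrite (_ : 3 - n = 2 + 2 - n - 1); [exact: weight_mode | lia].
Qed.

Lemma low_weights_vanish :
  exists K, forall (n : nat) v, (K < n)%N -> weight (3 - n%:Z) v -> v = 0.
Proof.
have [N low] := voa_bounded HV; exists `|3 - N|%N => n v n_gt v_wt.
by apply: (low (3 - n%:Z) v _ I v_wt); lia.
Qed.

Section TruncatedConditions.
Variables (psi : V -> F) (K : nat).
Hypotheses (psi_linear : linear_for *%R psi) (psi_vac : vac != 0 -> psi vac = 1).
Hypothesis low : forall (n : nat) v, (K < n)%N -> weight (3 - n%:Z) v -> v = 0.
HB.instance Definition _ := GRing.isLinear.Build F V F *%R psi psi_linear.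

Lemma high_modes_vanish x (n : nat) : weight 2 x -> (K < n)%N ->
  mode om n x = 0 /\ mode x n x = 0.
Proof.
move=> x_wt n_gt; split; apply: (low n_gt); apply: weight_mode2 => //.
exact: weight_om.
Qed.

Lemma vac_line y : (exists c, y = c *: vac) <-> y - psi y *: vac = 0.
Proof.
split=> [[c ->]|/subr0_eq->]; last by eexists.
have [->|/psi_vac psi1] := eqVneq vac 0; first by rewrite !scaler0 subr0.
by rewrite [psi _]linearZ /= psi1 mulr1 subrr.
Qed.

Lemma Sc_truncated x : Sc mode vac om x <-> weight 2 x /\
  ((forall n, (n < K.+1)%N -> mode om n x - mode x n x = 0) /\
   (mode x 2 x = 0 /\ (mode x 3 x - psi (mode x 3 x) *: vac = 0 /\
    forall n, (n < K)%N -> mode x n.+4 x = 0))).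
Proof.
split=> [/modes_of_Sc[x_wt om_x x_2 /vac_line x_3 x_high]|].
  split=> //; split=> [n _|]; first by rewrite om_x subrr.
  by split=> //; split=> // n _; apply: x_high.
move=> [x_wt [om_x [x_2 [/(vac_line _).2[c x_3] x_high]]]].
apply: (Sc_of_modes x_wt) x_2 x_3 _ => [n|n n_ge4].
  have [n_le|n_gt] := leqP n K; first by apply/subr0_eq/om_x.
  by have [-> ->] := high_modes_vanish x_wt n_gt.
have [n_le|n_gt] := leqP n (K + 3).
  by rewrite -(subnK n_ge4) addn4; apply: x_high; lia.
by have [_ ->] := high_modes_vanish x_wt (leq_ltn_trans (leq_addr 3 K) n_gt).
Qed.

End TruncatedConditions.

Section QuadraticMaps.
Variables (m : nat) (t : 'I_m -> V) (c : 'I_m -> V -> F).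
Hypothesis c_linear : forall j, linear_for *%R (c j).
Hypothesis t_weight : forall j, weight 2 (t j).
Hypothesis c_span : forall x, weight 2 x -> x = \sum_(j < m) c j x *: t j.
HB.instance Definition _ j := GRing.isLinear.Build F V F *%R (c j) (c_linear j).

Definition qform (A : 'I_m -> V) (Q : 'I_m -> 'I_m -> V) (x : V) : V :=
  \sum_(j < m) c j x *: A j + \sum_(j < m) \sum_(k < m) (c j x * c k x) *: Q j k.

Definition quadratic (w : int) (f : V -> V) := exists A Q,
  [/\ forall j, weight w (A j), forall j k, weight w (Q j k) &
      forall x, weight 2 x -> f x = qform A Q x].

Lemma qform_weight w A Q x : (forall j, weight w (A j)) ->
  (forall j k, weight w (Q j k)) -> weight w (qform A Q x).
Proof.
move=> A_wt Q_wt; apply: weightD; apply: weight_sum => j _; first exact: weightZ.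
by apply: weight_sum => k _; apply: weightZ.
Qed.

Section LinearFunctional.
Variables (phi : V -> F) (phi_linear : linear_for *%R phi).
HB.instance Definition _ := GRing.isLinear.Build F V F *%R phi phi_linear.

Lemma qform_functional A Q x : phi (qform A Q x) =
  \sum_(j < m) c j x * phi (A j) + \sum_(j < m) \sum_(k < m) (c j x * c k x) * phi (Q j k).
Proof.
rewrite linearD /= !linear_sum; congr (_ + _); apply: eq_bigr => j _ /=.
  exact: linearZ.
by rewrite linear_sum; apply: eq_bigr => k _; exact: linearZ.
Qed.

Lemma polyfun_qform A Q : polyfun (fun x => phi (qform A Q x)).
Proof.
rewrite (functional_extensionality _ _ (qform_functional A Q)); apply: pf_add.
  apply: (polyfun_sum (f := fun j x => c j x * phi (A j))) => j.
  by apply: pf_mul; [apply: pf_lin; exact: c_linear | exact: pf_const].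
apply: (polyfun_sum (f := fun j x => \sum_(k < m) (c j x * c k x) * phi (Q j k))) => j.
apply: (polyfun_sum (f := fun k x => (c j x * c k x) * phi (Q j k))) => k.
by apply: pf_mul; [apply: pf_mul; apply: pf_lin; exact: c_linear | exact: pf_const].
Qed.

Lemma quadratic_scale w w' f v : weight w' v -> quadratic w f ->
  quadratic w' (fun x => phi (f x) *: v).
Proof.
move=> v_wt [A [Q [_ _ fE]]].
exists (fun j => phi (A j) *: v), (fun j k => phi (Q j k) *: v).
split=> [j|j k|x x_wt]; try exact: weightZ.
rewrite fE // qform_functional scalerDl !scaler_suml; congr (_ + _).
  by apply: eq_bigr => j _; rewrite scalerA.
by apply: eq_bigr => j _; rewrite scaler_suml; apply: eq_bigr => k _; rewrite scalerA.
Qed.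

End LinearFunctional.

Lemma quadraticB w f g : quadratic w f -> quadratic w g ->
  quadratic w (fun x => f x - g x).
Proof.
move=> [A [Q [A_wt Q_wt fE]]] [A' [Q' [A'_wt Q'_wt gE]]].
exists (fun j => A j - A' j), (fun j k => Q j k - Q' j k).
split=> [j|j k|x x_wt]; try exact: weightB.
rewrite fE ?gE // /qform opprD addrACA -!sumrB; congr (_ + _).
  by apply: eq_bigr => j _; rewrite scalerBr.
by apply: eq_bigr => j _; rewrite -sumrB; apply: eq_bigr => k _; rewrite scalerBr.
Qed.

Lemma quadratic_mode_om n : quadratic (3 - n) (mode om n).
Proof.
exists (fun j => mode om n (t j)), (fun _ _ => 0); split=> [j|j k|x x_wt].
- exact: weight_mode2 weight_om (t_weight j).
- exact: weight0.
- rewrite /qform [X in _ + X]big1 ?addr0 => [|j _]; last first.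
    by rewrite big1 // => k _; rewrite scaler0.
  by rewrite {1}(c_span x_wt) linear_sum; apply: eq_bigr => j _; rewrite linearZ.
Qed.

Lemma quadratic_mode_diag n : quadratic (3 - n) (fun x => mode x n x).
Proof.
exists (fun _ => 0), (fun j k => mode (t j) n (t k)); split=> [j|j k|x x_wt].
- exact: weight0.
- exact: weight_mode2.
- rewrite /qform big1 ?add0r => [|j _]; last exact: scaler0.
  rewrite {1 2}(c_span x_wt) mode_suml; apply: eq_bigr => j _.
  by rewrite modeZl linear_sum scaler_sumr; apply: eq_bigr => k _; rewrite linearZ scalerA.
Qed.

Lemma quadratic_zero_closed w f : quadratic w f ->
  zariski_closed_in (weight 2) (fun x => weight 2 x /\ f x = 0).
Proof.
move=> [A [Q [A_wt Q_wt fE]]].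
have [mw [tw [cw [cw_lin _ cw_span]]]] := weight_coordinates w.
have cw0 l : cw l 0 = 0.
  have := cw_lin l 1 0 0; rewrite scale1r addr0 mul1r => dup.
  by apply: (addrI (cw l 0)); rewrite addr0 -dup.
exists mw, (fun l x => cw l (qform A Q x)); split=> [l|x].
  exact: polyfun_qform.
split=> [[x_wt fx0]|[x_wt cw_qf0]]; split=> //; first by move=> l; rewrite -fE // fx0 cw0.
rewrite fE // (cw_span _ (qform_weight x A_wt Q_wt)).
by apply: big1 => l _; rewrite cw_qf0 scale0r.
Qed.

End QuadraticMaps.

End VertexOperatorAlgebra.

Theorem theorem1p1 (F : numClosedFieldType) (V : lmodType F)
  (mode : V -> int -> V -> V) (vac om : V) :
  is_VOA mode (fun _ => True) vac om ->
  zariski_closed_in (fun v => Lop mode om 0 v = 2%:R *: v) (Sc mode vac om).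
Proof.
move=> HV.
have [m [t [c [c_lin t_wt c_span]]]] := weight_coordinates HV 2.
have [psi psi_lin psi_vac] := vac_functional HV.
have [K low] := low_weights_vanish HV.
have closed := quadratic_zero_closed HV c_lin.
have diag := quadratic_mode_diag HV t_wt c_span.
apply: eq_zariski_closed (fun x => iff_sym (Sc_truncated HV psi_lin psi_vac low x)) _.
apply: zariski_closedI.
  apply: zariski_closed_bigI => n.
  exact: closed (quadraticB HV (quadratic_mode_om HV t_wt c_span n) (diag n)).
apply: zariski_closedI; first exact: closed (diag 2).
apply: zariski_closedI.
  have scaled := quadratic_scale HV psi_lin (weight_vac HV) (diag 3).
  exact: closed (quadraticB HV (diag 3) scaled).
by apply: zariski_closed_bigI => n; exact: closed (diag _).
Qed.
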